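(* Let $n,k$ be positive integers with $k^2<2n$. Then for every $\pi\in\mathfrak{S}_k\setminus\{\mathrm{id}\}$, $$|\operatorname{Wg}(\pi)|\le\frac{2}{n^kk^2}\Big(\frac{k^2}{2n}\Big)^{|\pi|}\frac{1}{1-\frac{k^2}{2n}},$$ and $$|\operatorname{Wg}(\mathrm{id})|\le\frac1{n^k}+\frac{k^2}{2n^{k+2}}\,\frac{1}{1-\frac{k^4}{4n^2}}.$$
   Context: $\mathfrak{S}_k$ is the symmetric group on $\{1,\dots,k\}$. For $\sigma\in\mathfrak{S}_k$, $|\sigma|$ is the minimal number of transpositions needed to write $\sigma$ as a product of transpositions. The Weingarten function (depending on $n$ and $k$) is $\operatorname{Wg}(\pi)=\frac1{n^k}\sum_{r\ge0}(-1)^r\frac{c_r(\pi)}{n^r}$, where $c_r(\pi)$ is the number of tuples $(s_1,\dots,s_r,t_1,\dots,t_r)$ with $1\le s_i<t_i\le k$ for all $i$, $t_1\le\cdots\le t_r$, and $\pi=(s_1\,t_1)\cdots(s_r\,t_r)$ ($(s\,t)$ the transposition). *)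

From Stdlib Require Import Reals.
From mathcomp Require Import all_boot all_fingroup.

Set Implicit Arguments.
Unset Strict Implicit.
Unset Printing Implicit Defensive.

(* S_k is {perm 'I_k}; the points 1..k are encoded as the ordinals 0..k-1. *)

Definition trans_prod (k r : nat) (f : {ffun 'I_r -> 'I_k * 'I_k}) : {perm 'I_k} :=
  (\prod_(i < r) tperm (f i).1 (f i).2)%g.

Definition c_coef (k r : nat) (pi : {perm 'I_k}) : nat :=
  #|[set f : {ffun 'I_r -> 'I_k * 'I_k} |
      [&& [forall i : 'I_r, (f i).1 < (f i).2],
          [forall i : 'I_r, forall j : 'I_r, (i <= j) ==> ((f i).2 <= (f j).2)] &
          trans_prod f == pi]]|%N.

Definition prod_of_transp (k : nat) (pi : {perm 'I_k}) (r : nat) : bool :=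
  [exists f : {ffun 'I_r -> 'I_k * 'I_k},
     [forall i : 'I_r, (f i).1 != (f i).2] && (trans_prod f == pi)].

Lemma prod_of_transp_ex (k : nat) (pi : {perm 'I_k}) :
  exists r, prod_of_transp pi r.
Proof.
case: (prod_tpermP pi) => ts -> Hd.
exists (size ts); apply/existsP.
exists [ffun i => tnth (in_tuple ts) i].
apply/andP; split.
  apply/forallP => i; rewrite ffunE.
  by move/allP: Hd; apply; apply: mem_tnth.
rewrite /trans_prod (big_tnth _ _ ts).
by apply/eqP; apply: eq_bigr => i _; rewrite ffunE.
Qed.

Definition perm_length (k : nat) (pi : {perm 'I_k}) : nat :=
  ex_minn (prod_of_transp_ex pi).

(* r-th term of the series  Wg(pi) = n^{-k} sum_r (-1)^r c_r(pi) / n^r  *)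
Section Reals.
Local Open Scope R_scope.
Definition Wg_term (n k : nat) (pi : {perm 'I_k}) (r : nat) : R :=
  / (INR n ^ k) * ((-1) ^ r * INR (c_coef r pi) / (INR n ^ r)).

Definition is_Wg (n k : nat) (pi : {perm 'I_k}) (W : R) : Prop :=
  infinite_sum (Wg_term n pi) W.
End Reals.

From Stdlib Require Import Reals Lra Lia.
From mathcomp Require Import all_boot all_fingroup zify.
Set Implicit Arguments.
Unset Strict Implicit.
Unset Printing Implicit Defensive.

(* In a product of r+1 transpositions (s_i t_i) with s_i < t_i, the last
   factor is determined by the first r and by pi, so c_(r+1)(pi) is at most
   the number of r-tuples of pairs s < t, i.e. (k(k-1)/2)^r <= (k^2/2)^r.
   Hence |Wg-term r+1| <= (2 / (n^k k^2)) (k^2/2n)^(r+1).  Moreover c_r(pi)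
   vanishes for r < |pi|, and for pi = id it vanishes for odd r (sign of a
   product of r transpositions) while c_0(id) = 1.  Summing the resulting
   geometric series gives both bounds. *)

Lemma tperm_inj_ltn k (a b c d : 'I_k) : a < b -> c < d ->
  tperm a b = tperm c d -> (a, b) = (c, d).
Proof.
move=> ab cd E.
have := congr1 (fun s : {perm 'I_k} => s a) E; rewrite tpermL.
case: tpermP => [ac bd | ad bc | _ _ ba].
- by rewrite ac bd.
- by move: ab cd; rewrite ad -bc => /ltnW; rewrite leqNgt => /negbTE ->.
- by move: ab; rewrite ba ltnn.
Qed.

Definition ltn_pairs k := [set p : 'I_k * 'I_k | p.1 < p.2].

Lemma card_ltn_pairs_double k : 2 * #|ltn_pairs k| <= k * k.
Proof.
set gtn_pairs := [set p : 'I_k * 'I_k | p.2 < p.1].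
have swap_inj : injective (fun p : 'I_k * 'I_k => (p.2, p.1)).
  by move=> [? ?] [? ?] [-> ->].
have le_lt_gt : #|ltn_pairs k| <= #|gtn_pairs|.
  rewrite -(card_imset (ltn_pairs k) swap_inj); apply: subset_leq_card.
  by apply/subsetP => p /imsetP [x]; rewrite !inE => ? ->.
have disj : ltn_pairs k :&: gtn_pairs = set0.
  apply/setP => p; rewrite !inE; apply/negP => /andP [H1 H2].
  by move: (ltn_trans H1 H2); rewrite ltnn.
have := cardsUI (ltn_pairs k) gtn_pairs; rewrite disj cards0 addn0 => E.
have : #|ltn_pairs k :|: gtn_pairs| <= k * k.
  by apply: leq_trans (max_card _) _; rewrite card_prod card_ord.
rewrite E; lia.
Qed.

Lemma c_coef_S_le k r (pi : {perm 'I_k}) : c_coef r.+1 pi <= #|ltn_pairs k| ^ r.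
Proof.
rewrite /c_coef; set A := [set f | _].
pose drop_last (f : {ffun 'I_r.+1 -> 'I_k * 'I_k}) :=
  [ffun i : 'I_r => f (widen_ord (leqnSn r) i) : 'I_k * 'I_k].
have drop_last_inj : {in A &, injective drop_last}.
  move=> f g; rewrite !inE => /and3P [f1 _ /eqP f3] /and3P [g1 _ /eqP g3] E.
  have Ew i : f (widen_ord (leqnSn r) i) = g (widen_ord (leqnSn r) i).
    by have := congr1 (fun h : {ffun 'I_r -> 'I_k * 'I_k} => h i) E; rewrite !ffunE.
  have last_tperm :
      tperm (f ord_max).1 (f ord_max).2 = tperm (g ord_max).1 (g ord_max).2.
    move: f3; rewrite -g3 /trans_prod !big_ord_recr /=.
    under eq_bigr => i _ do rewrite Ew.
    by move/mulgI.
  have last_eq := tperm_inj_ltn (forallP f1 ord_max) (forallP g1 ord_max) last_tperm.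
  apply/ffunP => i; have [lt_ir|ge_ir] := ltnP i r.
    by have -> : i = widen_ord (leqnSn r) (Ordinal lt_ir) by apply: val_inj.
  have -> : i = ord_max by apply: val_inj => /=; have := ltn_ord i; lia.
  by rewrite [f _]surjective_pairing [g _]surjective_pairing.
rewrite -(card_in_imset drop_last_inj).
rewrite -[r in _ ^ r]card_ord -(card_ffun_on 'I_r (ltn_pairs k)).
apply: subset_leq_card; apply/subsetP => h /imsetP [f].
rewrite inE => /and3P [f1 _ _] ->.
by apply/ffun_onP => i; rewrite ffunE inE; apply: (forallP f1).
Qed.

Lemma c_coef_lt_perm_length k r (pi : {perm 'I_k}) :
  r < perm_length pi -> c_coef r pi = 0.
Proof.
move=> lt_r; apply/eqP; rewrite cards_eq0; apply/eqP/setP => f.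
rewrite inE in_set0; apply/negP => /and3P [f1 _ f3].
have pi_r : prod_of_transp pi r.
  apply/existsP; exists f; rewrite f3 andbT; apply/forallP => i.
  by rewrite neq_ltn (forallP f1 i).
move: lt_r; rewrite /perm_length; case: ex_minnP => m _ min_m.
by rewrite ltnNge (min_m _ pi_r).
Qed.

Lemma odd_perm_prod k r (F : 'I_r -> {perm 'I_k}) :
  (forall i, odd_perm (F i)) -> odd_perm (\prod_(i < r) F i)%g = odd r.
Proof.
elim: r F => [|r IH] F HF; first by rewrite big_ord0 odd_perm1.
by rewrite big_ord_recr odd_permM IH ?HF //=; case: (odd r).
Qed.

Lemma c_coef_odd_perm1 k r : odd r -> c_coef r (1 : {perm 'I_k}) = 0.
Proof.
move=> odd_r; apply/eqP; rewrite cards_eq0; apply/eqP/setP => f.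
rewrite inE in_set0; apply/negP => /and3P [f1 _ /eqP f3].
have := @odd_perm_prod k r (fun i => tperm (f i).1 (f i).2).
rewrite -/(trans_prod f) f3 odd_perm1 odd_r => all_odd.
suff : false by []; apply: all_odd => i.
by rewrite odd_tperm neq_ltn (forallP f1 i).
Qed.

Lemma c_coef0_le1 k (pi : {perm 'I_k}) : c_coef 0 pi <= 1.
Proof. by apply: leq_trans (max_card _) _; rewrite card_ffun card_ord. Qed.

Lemma perm_length_gt0 k (pi : {perm 'I_k}) : pi != 1%g -> 0 < perm_length pi.
Proof.
move=> pi_ne1; rewrite /perm_length; case: ex_minnP => [[|m]] // /existsP [f].
by move=> /andP [_ /eqP E]; move: pi_ne1; rewrite -E /trans_prod big_ord0 eqxx.
Qed.

Local Open Scope R_scope.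

Lemma INR_expn m r : INR (m ^ r)%N = INR m ^ r.
Proof. by elim: r => [|r IH]; rewrite ?expn0 // expnS mulnE mult_INR IH. Qed.

Lemma infinite_sum_abs_le (a : nat -> R) (T : R) :
  (forall N, sum_f_R0 (fun i => Rabs (a i)) N <= T) ->
  exists W, infinite_sum a W /\ Rabs W <= T.
Proof.
move=> partial_le.
have growing : Un_growing (sum_f_R0 (fun i => Rabs (a i))).
  by move=> N; rewrite tech5; have := Rabs_pos (a N.+1); lra.
have bounded : has_ub (sum_f_R0 (fun i => Rabs (a i))).
  by exists T => x [i ->]; apply: partial_le.
have [W HW] := cv_cauchy_2 _ (cauchy_abs _ (cv_cauchy_1 _ (growing_cv _ growing bounded))).
exists W; split; first exact: HW.
apply: Rnot_lt_le => lt_TW.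
have [N HN] := HW (Rabs W - T) ltac:(lra).
have := HN N (Nat.le_refl N); rewrite /Rdist => close.
have := sum_f_R0_triangle a N; have := partial_le N.
have := Rabs_triang_inv W (sum_f_R0 a N); rewrite Rabs_minus_sym.
lra.
Qed.

(* [g N] bounds the remaining mass after the first [N+1] terms. *)
Lemma sum_f_R0_le_telescoping (e g : nat -> R) (T : R) :
  (forall N, 0 <= g N) -> e 0%nat + g 0%nat = T ->
  (forall N, e N.+1 + g N.+1 = g N) -> forall N, sum_f_R0 e N <= T.
Proof.
move=> g_ge0 init step N.
suff E : sum_f_R0 e N + g N = T by have := g_ge0 N; lra.
elim: N => [|N IH] /=; first exact: init.
by have := step N; lra.
Qed.

Lemma sum_geom_tail_le (C q : R) (L N : nat) : 0 <= C -> 0 <= q < 1 -> (0 < L)%N ->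
  sum_f_R0 (fun r => if (L <= r)%N then C * q ^ r else 0) N <= C * q ^ L / (1 - q).
Proof.
move=> C_ge0 q01 L_gt0.
apply: (sum_f_R0_le_telescoping (g := fun N => C * q ^ (maxn N.+1 L) / (1 - q))).
- move=> M; apply: Rmult_le_pos; last by apply/Rlt_le/Rinv_0_lt_compat; lra.
  by apply: Rmult_le_pos => //; apply: pow_le; lra.
- have -> : (L <= 0)%N = false by apply/negbTE; rewrite -ltnNge.
  have -> : maxn 1 L = L by lia.
  field; lra.
- move=> M; case: (leqP L M.+1) => le_LM.
    have -> : maxn M.+2 L = M.+2 by lia.
    have -> : q ^ M.+2 = q * q ^ M.+1 by [].
    field; lra.
  have -> : maxn M.+2 L = L by lia.
  lra.
Qed.

Lemma sum_geom_even_le (a C q : R) (N : nat) : 0 <= C -> 0 <= q < 1 ->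
  sum_f_R0 (fun r => if r == 0%N then a else if odd r then 0 else C * q ^ r) N
    <= a + C * q ^ 2 / (1 - q ^ 2).
Proof.
move=> C_ge0 q01.
have q2_lt1 : q ^ 2 < 1 by rewrite /= Rmult_1_r; nra.
apply: (sum_f_R0_le_telescoping (g := fun N => C * (q ^ 2) ^ (N./2).+1 / (1 - q ^ 2))).
- move=> M; apply: Rmult_le_pos; last by apply/Rlt_le/Rinv_0_lt_compat; lra.
  by apply: Rmult_le_pos => //; apply: pow_le; nra.
- by rewrite /= Rmult_1_r.
- move=> M; rewrite -uphalfE uphalf_half.
  have -> : (M.+1 == 0)%N = false by [].
  have -> : odd M.+1 = ~~ odd M by [].
  case odd_M: (odd M); last by rewrite add0n /=; lra.
  have -> : M.+1 = (2 * (M./2).+1)%N.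
    by have := odd_double_half M; rewrite odd_M -muln2; lia.
  rewrite mulnE pow_mult add1n.
  have -> : (q ^ 2) ^ (M./2).+2 = q ^ 2 * (q ^ 2) ^ (M./2).+1 by [].
  rewrite /=; field; lra.
Qed.

Lemma INR_c_coef_S_le k r (pi : {perm 'I_k}) :
  INR (c_coef r.+1 pi) * 2 ^ r <= (INR k ^ 2) ^ r.
Proof.
have c_le : INR (c_coef r.+1 pi) <= INR #|ltn_pairs k| ^ r.
  by rewrite -INR_expn; apply/le_INR/leP/c_coef_S_le.
have pairs_le : 2 * INR #|ltn_pairs k| <= INR k ^ 2.
  have := card_ltn_pairs_double k => /leP /le_INR.
  by rewrite !mulnE !mult_INR /=; lra.
have pow2_ge0 : 0 <= 2 ^ r by apply: pow_le; lra.
apply: Rle_trans (Rmult_le_compat_r _ _ _ pow2_ge0 c_le) _.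
rewrite -Rpow_mult_distr Rmult_comm; apply: pow_incr; split => //.
by have := pos_INR #|ltn_pairs k|; lra.
Qed.

Section WeingartenBounds.

Variables n k : nat.
Hypotheses (n_gt0 : (0 < n)%N) (k_gt0 : (0 < k)%N).

Let n_pos : 0 < INR n. Proof. exact/lt_0_INR/ltP. Qed.
Let k_pos : 0 < INR k. Proof. exact/lt_0_INR/ltP. Qed.

Lemma Rabs_Wg_term (pi : {perm 'I_k}) r :
  Rabs (Wg_term n pi r) = INR (c_coef r pi) / (INR n ^ k * INR n ^ r).
Proof.
have nk_pos := pow_lt _ k n_pos; have nr_pos := pow_lt _ r n_pos.
rewrite /Wg_term Rabs_mult Rabs_inv Rabs_pos_eq; last lra.
rewrite /Rdiv !Rabs_mult pow_1_abs Rabs_inv (Rabs_pos_eq (INR _)); last exact: pos_INR.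
rewrite (Rabs_pos_eq (_ ^ r)); last lra.
field; lra.
Qed.

Lemma Rabs_Wg_term_S_le (pi : {perm 'I_k}) r :
  Rabs (Wg_term n pi r.+1) <=
  2 / (INR n ^ k * INR k ^ 2) * (INR k ^ 2 / (2 * INR n)) ^ r.+1.
Proof.
rewrite Rabs_Wg_term.
have nk_pos := pow_lt _ k n_pos; have nr_pos := pow_lt _ r n_pos.
have pow2_pos := pow_lt 2 r ltac:(lra).
have := INR_c_coef_S_le r pi.
set c := INR _; set X := (INR k ^ 2) ^ r => c_le.
rewrite /Rdiv Rpow_mult_distr pow_inv Rpow_mult_distr /= -/X.
have -> : 2 * / (INR n ^ k * (INR k * (INR k * 1))) *
    (INR k * (INR k * 1) * X * / (2 * 2 ^ r * (INR n * INR n ^ r)))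
    = X / 2 ^ r * / (INR n ^ k * (INR n * INR n ^ r)).
  by field; repeat split; lra.
apply: Rmult_le_compat_r.
  by apply/Rlt_le/Rinv_0_lt_compat/Rmult_lt_0_compat => //; apply: Rmult_lt_0_compat.
apply: (Rmult_le_reg_r (2 ^ r)) => //.
by rewrite /Rdiv Rmult_assoc Rinv_l; lra.
Qed.

Hypothesis k2_lt_2n : (k ^ 2 < 2 * n)%N.

Let k2_lt : INR k ^ 2 < 2 * INR n.
Proof. by have := k2_lt_2n => /ltP /lt_INR; rewrite INR_expn mulnE mult_INR /=; lra. Qed.

Let ratio_bounds : 0 <= INR k ^ 2 / (2 * INR n) < 1.
Proof.
split; first by apply: Rmult_le_pos; [apply: pow_le | apply/Rlt_le/Rinv_0_lt_compat]; lra.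
apply: (Rmult_lt_reg_r (2 * INR n)); first lra.
by rewrite /Rdiv Rmult_assoc Rinv_l; lra.
Qed.

Let scale_ge0 : 0 <= 2 / (INR n ^ k * INR k ^ 2).
Proof.
apply/Rlt_le/Rdiv_lt_0_compat; first lra.
by apply: Rmult_lt_0_compat; apply: pow_lt.
Qed.

Lemma Wg_bound_neq1 (pi : {perm 'I_k}) : pi <> 1%g ->
  exists W : R, is_Wg n pi W /\
    Rabs W <= 2 / (INR n ^ k * INR k ^ 2)
              * (INR k ^ 2 / (2 * INR n)) ^ perm_length pi
              * (1 / (1 - INR k ^ 2 / (2 * INR n))).
Proof.
move=> /eqP /perm_length_gt0 L_gt0.
rewrite /Rdiv Rmult_1_l -/(Rdiv _ (1 - _)).
apply: infinite_sum_abs_le => N.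
apply: Rle_trans (sum_geom_tail_le N scale_ge0 ratio_bounds L_gt0).
apply: sum_Rle => r _; case: leqP => [le_Lr | lt_rL].
  by case: r le_Lr => [|r] le_Lr; [move: (leq_trans L_gt0 le_Lr) | apply: Rabs_Wg_term_S_le].
rewrite Rabs_Wg_term c_coef_lt_perm_length //= /Rdiv Rmult_0_l; lra.
Qed.

Lemma Wg_bound_perm1 :
  exists W : R, is_Wg n (1%g : {perm 'I_k}) W /\
    Rabs W <= 1 / INR n ^ k
              + INR k ^ 2 / (2 * INR n ^ (k + 2))
                * (1 / (1 - INR k ^ 4 / (4 * INR n ^ 2))).
Proof.
set q := INR k ^ 2 / (2 * INR n); set C := 2 / (INR n ^ k * INR k ^ 2).
have nk_pos := pow_lt _ k n_pos.
have k4_lt : INR k ^ 2 * INR k ^ 2 < 2 * INR n * (2 * INR n).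
  by have := pow_lt _ 2 k_pos; nra.
have -> : INR k ^ 2 / (2 * INR n ^ (k + 2)) * (1 / (1 - INR k ^ 4 / (4 * INR n ^ 2)))
    = C * q ^ 2 / (1 - q ^ 2).
  by move: k4_lt; rewrite /C /q pow_add /= => k4_lt; field; repeat split; lra.
apply: infinite_sum_abs_le => N.
apply: Rle_trans (sum_geom_even_le (1 / INR n ^ k) N scale_ge0 ratio_bounds).
apply: sum_Rle => -[|r] _ /=.
  rewrite Rabs_Wg_term /= Rmult_1_r /Rdiv; apply: Rmult_le_compat_r.
    exact/Rlt_le/Rinv_0_lt_compat.
  by have := c_coef0_le1 (1 : {perm 'I_k}) => /leP /le_INR.
case: ifP => odd_r; last exact: Rabs_Wg_term_S_le.
by rewrite Rabs_Wg_term c_coef_odd_perm1 //= /Rdiv Rmult_0_l; lra.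
Qed.

End WeingartenBounds.

Theorem lemma5 (n k : nat) (hn : (0 < n)%N) (hk : (0 < k)%N)
    (hkn : (k ^ 2 < 2 * n)%N) :
  (forall pi : {perm 'I_k}, pi <> 1%g ->
     exists W : R, is_Wg n pi W /\
       Rabs W <= 2 / (INR n ^ k * INR k ^ 2)
                  * (INR k ^ 2 / (2 * INR n)) ^ perm_length pi
                  * (1 / (1 - INR k ^ 2 / (2 * INR n)))) /\
  (exists W : R, is_Wg n (1%g : {perm 'I_k}) W /\
     Rabs W <= 1 / INR n ^ k
                + INR k ^ 2 / (2 * INR n ^ (k + 2))
                  * (1 / (1 - INR k ^ 4 / (4 * INR n ^ 2)))).
Proof. by split; [exact: Wg_bound_neq1 | exact: Wg_bound_perm1]. Qed.
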